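(* Let $d\ge 1$ and let $X$ be a mutual-visibility set of $\mathit{BF}(d)$. Then $|X\cap A_c|\le 2$ for every column $c\in\{0,1\}^d$.
   Context: Binary strings $c=c_0\cdots c_{d-1}$ have positions $0,\dots,d-1$ from the left; $c(i)$ is $c$ with bit $i$ complemented. The butterfly $\mathit{BF}(d)$ has vertex set $\{[\ell,c]:\ell\in\{0,\dots,d\},\ c\in\{0,1\}^d\}$ ($\ell$ is the level, $c$ the column); for $\ell\in\{0,\dots,d-1\}$, $[\ell,c]$ is adjacent to $[\ell+1,c']$ iff $c'=c$ or $c'=c(\ell)$, and there are no other edges. $A_c=\{[\ell,c]:\ell\in\{0,\dots,d\}\}$ is the column $c$ and $L_j=\{[j,c]:c\in\{0,1\}^d\}$ is level $j$. For a connected graph $G$ and $X\subseteq V(G)$, two vertices $x,y$ are $X$-visible if some shortest $x,y$-path has no internal vertex in $X$; $X$ is a mutual-visibility set if every two vertices of $X$ are $X$-visible; $\mu(G)$ is the maximum size of a mutual-visibility set. *)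

From mathcomp Require Import all_boot.
Set Implicit Arguments. Unset Strict Implicit. Unset Printing Implicit Defensive.

Section Graph.
Variables (T : finType) (e : rel T).

(* p = [v1; ...; vk] is a walk x = v0, v1, ..., vk = y of length size p *)
Definition walk (x : T) (p : seq T) (y : T) : bool := path e x p && (last x p == y).

Definition shortest_walk (x : T) (p : seq T) (y : T) : Prop :=
  walk x p y /\ forall q, walk x q y -> size p <= size q.

(* internal vertices of the walk x :: p (i.e. all except the endpoints) *)
Definition internal (p : seq T) : seq T := take (size p).-1 p.

Definition visible (X : {set T}) (x y : T) : Prop :=
  exists p, shortest_walk x p y /\ all (fun v => v \notin X) (internal p).

Definition mutual_visibility_set (X : {set T}) : Prop :=
  forall x y, x \in X -> y \in X -> x != y -> visible X x y.
End Graph.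

(* vertex [l, c] = (l, c) with l in {0..d}, c : {0,1}^d (positions 0..d-1) *)
Definition bf_vertex (d : nat) := ('I_d.+1 * {ffun 'I_d -> bool})%type.

Definition flip d (c : {ffun 'I_d -> bool}) (i : nat) : {ffun 'I_d -> bool} :=
  [ffun j : 'I_d => if val j == i then ~~ c j else c j].

Definition bf_up d (u v : bf_vertex d) : bool :=
  (val v.1 == (val u.1).+1) && ((v.2 == u.2) || (v.2 == flip u.2 (val u.1))).

Definition bf_adj d : rel (bf_vertex d) := fun u v => bf_up u v || bf_up v u.

Definition column d (c : {ffun 'I_d -> bool}) : {set bf_vertex d} :=
  [set v : bf_vertex d | v.2 == c].

From mathcomp Require Import all_boot.
From mathcomp Require Import zify.
Set Implicit Arguments. Unset Strict Implicit.

(* Every edge of BF(d) joins consecutive levels, so a walk of length n changes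
   the level by at most n.  Column c contains a walk from level a to level b of
   length b - a, hence a shortest walk between two vertices of column c has
   exactly that length and climbs one level per step.  A climbing edge out of
   level l may only flip bit l, so after climbing from level a to level l the
   walk sits in a column agreeing with c outside the bits [a, l), and, reading
   the rest of the walk, agreeing with c outside the bits [l, b): it is the
   vertex [l, c] itself.  So a shortest walk between [a, c] and [b, c] passes
   through every [l, c] with a < l < b as an internal vertex.  Three vertices
   of X in column c have three distinct levels, and the middle one then blocks
   every shortest walk between the two outer ones. *)

Section Butterfly.
Variable d : nat.

Local Notation vertex := (bf_vertex d).
Local Notation adj := (@bf_adj d).
Local Notation level v := (nat_of_ord v.1).

Lemma vertex_eq (u v : vertex) : level u = level v -> u.2 = v.2 -> u = v.
Proof. by case: u v => [a b] [a' b'] /= h ->; rewrite (val_inj h). Qed.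

Lemma adj_level (u v : vertex) :
  adj u v -> level v = (level u).+1 \/ level u = (level v).+1.
Proof.
by rewrite /bf_adj /bf_up => /orP [/andP [/eqP -> _] | /andP [/eqP -> _]]; auto.
Qed.

Lemma path_level_bound (u : vertex) p : path adj u p ->
  level (last u p) <= level u + size p /\ level u <= level (last u p) + size p.
Proof.
elim: p u => [|v p IH] u /=; first by rewrite addn0.
move=> /andP [huv /IH [h1 h2]]; case: (adj_level huv) => ?; lia.
Qed.

Lemma climbing_path_bits (u : vertex) p : path adj u p ->
  level u + size p = level (last u p) ->
  forall j : 'I_d, j < level u \/ level (last u p) <= j ->
  (last u p).2 j = u.2 j.
Proof.
elim: p u => [|v p IH] u //= /andP [huv hp] hsize j hj.
have [hlast _] := path_level_bound hp.
have /andP [/eqP /= hlv /orP hcol] : bf_up u v.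
  case/orP: huv => // /andP [/eqP /= hvu _]; lia.
rewrite (IH v hp _ j); [| lia | lia].
case: hcol => /eqP ->; rewrite ?ffunE //.
by have -> : (val j == val u.1) = false by apply/eqP => /=; lia.
Qed.

Fixpoint column_segment (c : {ffun 'I_d -> bool}) (l n : nat) : seq vertex :=
  if n is n'.+1 then (inord l.+1, c) :: column_segment c l.+1 n' else [::].

Lemma size_column_segment c l n : size (column_segment c l n) = n.
Proof. by elim: n l => [|n IH] l //=; rewrite IH. Qed.

Lemma column_segment_walk c l n : l + n <= d ->
  walk adj (inord l, c) (column_segment c l n) (inord (l + n), c).
Proof.
rewrite /walk; elim: n l => [|n IH] l hl /=; first by rewrite addn0 eqxx.
have /andP [hp hlast] := IH l.+1 (leq_trans (eq_leq (addSnnS l n)) hl).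
rewrite -addSnnS hp hlast andbT /bf_adj /bf_up /= !inordK; try lia.
by rewrite !eqxx.
Qed.

Lemma shortest_walk_column_size (x z : vertex) (p : seq vertex) :
  x.2 = z.2 -> level x <= level z -> shortest_walk adj x p z ->
  size p = level z - level x.
Proof.
move=> hcol hxz [/andP [hp /eqP hlast] hmin].
have [hlow _] := path_level_bound hp; rewrite hlast in hlow.
suff : size p <= level z - level x by lia.
rewrite -[level z - level x](size_column_segment x.2 (level x)); apply: hmin.
have hz := ltn_ord z.1.
have ex : x = (inord (level x), x.2) by apply: vertex_eq; rewrite //= inordK.
have ez : z = (inord (level x + (level z - level x)), x.2).
  by apply: vertex_eq; rewrite //= inordK; lia.
by rewrite {1}ex {2}ez; apply: column_segment_walk; lia.
Qed.

Lemma shortest_walk_through_column (x y z : vertex) (p : seq vertex) :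
  x.2 = y.2 -> z.2 = y.2 -> level x < level y < level z ->
  shortest_walk adj x p z -> y \in internal p.
Proof.
move=> hxy hzy /andP [lxy lyz] sw.
have hsize := shortest_walk_column_size (etrans hxy (esym hzy)) (ltnW (ltn_trans lxy lyz)) sw.
case: sw => /andP [hp /eqP hlast] _.
(* Split the walk after k = level y - level x steps at a vertex v; both halves
   climb one level per step, which pins down the level and the column of v. *)
set k := level y - level x; have hk : k <= size p by lia.
move: hp hlast; rewrite -(cat_take_drop k p) cat_path last_cat => /andP [p1 p2] hlast.
set v := last x (take k p).
have [lv1 _] := path_level_bound p1; have [lv2 _] := path_level_bound p2.
rewrite size_takel // in lv1; rewrite hlast size_drop in lv2.
have lv : level v = level y by move: lv1 lv2; rewrite -/v; lia.
have bits1 := climbing_path_bits p1; have bits2 := climbing_path_bits p2.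
rewrite size_takel // -/v lv in bits1; rewrite hlast size_drop -/v lv in bits2.
have vy : v = y.
  apply: vertex_eq => //; apply/ffunP => j.
  case: (ltnP j (level y)) => hj.
  - by rewrite -hzy -bits2 //; [lia | left].
  - by rewrite -hxy bits1 //; [lia | right].
(* v = y is not the start x, and it comes before the last vertex z. *)
have : v \in x :: take k p by apply: mem_last.
rewrite inE vy => /orP [/eqP hyx | hy]; first by rewrite hyx ltnn in lxy.
have hkint : k <= (size p).-1 by lia.
by apply: (@mem_take k); rewrite cat_take_drop /internal take_takel.
Qed.

Lemma column_three_levels (S : {set vertex}) (c : {ffun 'I_d -> bool}) :
  S \subset column c -> 2 < #|S| ->
  exists x y z, [/\ x \in S, y \in S, z \in S & level x < level y < level z].
Proof.
move=> sSc hS.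
have incol v : v \in S -> v.2 = c by move/(subsetP sSc); rewrite inE => /eqP.
have [x0 Sx0] : exists x0, x0 \in S by apply/set0Pn; rewrite -card_gt0; lia.
case: (arg_minnP (fun v : vertex => level v) Sx0) => x Sx minx.
case: (arg_maxnP (fun v : vertex => level v) Sx0) => z Sz maxz.
have [y] : exists y, y \in S :\: [set x; z].
  apply/set0Pn; rewrite -card_gt0 cardsD.
  have : #|S :&: [set x; z]| <= 2.
    by rewrite (leq_trans (subset_leq_card (subsetIr _ _))) // cards2; case: (x != z).
  lia.
rewrite in_setD in_set2 negb_or => /andP [/andP [nyx nyz] Sy].
have same_level v w : v \in S -> w \in S -> v != w -> level v != level w.
  by move=> Sv Sw; apply: contra => /eqP h; apply/eqP/vertex_eq; rewrite // !incol.
exists x, y, z; split => //; apply/andP; split; rewrite ltn_neqAle.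
- by rewrite eq_sym same_level //; exact: minx.
- by rewrite same_level //; exact: maxz.
Qed.

End Butterfly.

Theorem lemma5p1 (d : nat) (hd : 1 <= d) (X : {set bf_vertex d}) :
  mutual_visibility_set (@bf_adj d) X ->
  forall c : {ffun 'I_d -> bool}, #|X :&: column c| <= 2.
Proof.
move=> mv c; rewrite leqNgt; apply/negP => /(column_three_levels (subsetIr X _)).
case=> x [y [z [Sx Sy Sz lvl]]].
have incol v : v \in X :&: column c -> v \in X /\ v.2 = c.
  by rewrite !inE => /andP [-> /eqP].
have [Xx cx] := incol x Sx; have [Xy cy] := incol y Sy; have [Xz cz] := incol z Sz.
have nxz : x != z by apply/eqP => hxz; move: lvl; rewrite hxz; lia.
have [p [sw /allP notX]] := mv x z Xx Xz nxz.
have := notX y (shortest_walk_through_column (etrans cx (esym cy)) (etrans cz (esym cy)) lvl sw).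
by rewrite Xy.
Qed.
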